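(* Let $S$ be an LAD-AG-groupoid. Then $S$ is right commutative, i.e. $a(bc)=a(cb)$ for all $a,b,c\in S$.
   Context: A groupoid is a set $S$ with a binary operation written as juxtaposition ($ab$, also $a\cdot b$); $ab\cdot c$ means $(ab)c$ and $a\cdot bc$ means $a(bc)$. An AG-groupoid is a groupoid satisfying the left invertive law $(ab)c=(cb)a$ for all $a,b,c\in S$. An LAD-AG-groupoid (left abelian distributive AG-groupoid) is an AG-groupoid satisfying $a(bc)=(ab)(ca)$ for all $a,b,c\in S$. *)

Definition left_invertive {S : Type} (op : S -> S -> S) : Prop :=
  forall a b c : S, op (op a b) c = op (op c b) a.

Definition AG_groupoid {S : Type} (op : S -> S -> S) : Prop := left_invertive op.

Definition LAD_AG_groupoid {S : Type} (op : S -> S -> S) : Prop :=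
  AG_groupoid op /\ forall a b c : S, op a (op b c) = op (op a b) (op c a).

Definition right_commutative {S : Type} (op : S -> S -> S) : Prop :=
  forall a b c : S, op a (op b c) = op a (op c b).

(* Every AG-groupoid is medial, (xy)(zw) = (xz)(yw).  Expanding both sides of
   a(bc) = a(cb) with the left abelian distributive law gives (ab)(ca) and
   (ac)(ba), which mediality identifies. *)

Lemma left_invertive_medial {S : Type} (op : S -> S -> S) :
  left_invertive op ->
  forall x y z w : S, op (op x y) (op z w) = op (op x z) (op y w).
Proof.
  intros LI x y z w.
  rewrite (LI x y (op z w)), (LI z w y), (LI (op y w) z x).
  reflexivity.
Qed.

Theorem mainTheorem1 (S : Type) (op : S -> S -> S) :
  LAD_AG_groupoid op -> right_commutative op.
Proof.
  intros [LI D] a b c.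
  rewrite (D a b c), (D a c b).
  apply (left_invertive_medial op LI).
Qed.
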